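(* Let $c\in\mathbb{Q}$ with $c<0$, let $n\ge1$, and let $f$ be a $c$-frieze of order $n$ over $\mathbb{Q}$. If $\Sigma\subseteq\mathbb{B}_n$ is a section such that $f(p)>0$ for every $p=(i,j)\in\Sigma$ with $-1\le j-i\le n$ (the points of $\Sigma$ in rows $0,\dots,n+1$), then $f(i,j)>0$ for all $(i,j)\in\mathbb{Z}^2$ with $-1\le j-i\le n$.
   Context: The $c$-continuant polynomials $P_k=P_k^c$ ($k\ge-1$) are defined by $P_{-1}=0$, $P_0=1$, and for $k\ge1$, $P_k(x_1,\dots,x_k)=x_kP_{k-1}(x_1,\dots,x_{k-1})+cP_{k-2}(x_1,\dots,x_{k-2})$. A family $(x_i)_{i\in\mathbb{Z}}$ of rationals is $n$-admissible if $P_{n+2}(x_i,\dots,x_{i+n+1})=0$ for all $i$. Let $\mathbb{B}_n=\{(i,j)\in\mathbb{Z}^2:-2\le j-i\le n+1\}$; the point $(i,j)$ lies in row $j-i+1$. A $c$-frieze of order $n$ over $\mathbb{Q}$ is a function $f:\mathbb{B}_n\to\mathbb{Q}$ for which there is an $n$-admissible family $(x_i)$ with $f(i,j)=P_{j-i+1}(x_i,\dots,x_j)$ for all $(i,j)\in\mathbb{B}_n$ (rows $-1$ and $n+2$ are identically $0$). A section is a subset $\Sigma\subseteq\mathbb{B}_n$ with $|\Sigma|=n+4$ such that for every $(i_0,j_0)\in\Sigma$: (a) if $(i_0,j_0-1)$ and $(i_0+1,j_0)$ lie in $\mathbb{B}_n$, at least one of them is in $\Sigma$; (b) if $(i_0-1,j_0)$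 and $(i_0,j_0+1)$ lie in $\mathbb{B}_n$, at least one of them is in $\Sigma$. *)

From mathcomp Require Import all_boot all_order all_algebra.
Set Implicit Arguments. Unset Strict Implicit. Unset Printing Implicit Defensive.
Import Order.TTheory GRing.Theory Num.Theory.
Local Open Scope ring_scope.

(* contpair c x i k = (P_k(x_i,...,x_{i+k-1}), P_{k-1}(x_i,...,x_{i+k-2}))
   with P_{-1} = 0, P_0 = 1, P_{k+1} = x_{i+k} P_k + c P_{k-1}. *)
Fixpoint contpair (c : rat) (x : int -> rat) (i : int) (k : nat) : rat * rat :=
  match k with
  | 0%N => (1, 0)
  | k'.+1 => let p := contpair c x i k' in
             (x (i + k'%:Z) * p.1 + c * p.2, p.1)
  end.

Definition cont (c : rat) (x : int -> rat) (i : int) (k : nat) : rat :=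
  (contpair c x i k).1.

Definition contZ (c : rat) (x : int -> rat) (i : int) (m : int) : rat :=
  match m with
  | Posz k => cont c x i k
  | Negz _ => 0
  end.

Definition admissible (c : rat) (n : nat) (x : int -> rat) : Prop :=
  forall i : int, cont c x i n.+2 = 0.

Definition inB (n : nat) (p : int * int) : bool :=
  (-2 <= p.2 - p.1) && (p.2 - p.1 <= n%:Z + 1).

(* c-frieze of order n over Q: a function on B_n (values off B_n irrelevant) *)
Definition is_frieze (c : rat) (n : nat) (f : int -> int -> rat) : Prop :=
  exists x : int -> rat, admissible c n x /\
    forall i j : int, inB n (i, j) -> f i j = contZ c x i (j - i + 1).

(* A section: a finite subset of B_n of cardinality n+4 (given as a
   duplicate-free list) satisfying conditions (a) and (b). *)
Definition is_section (n : nat) (S : seq (int * int)) : Prop :=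
  [/\ uniq S, size S = (n + 4)%N, all (inB n) S &
   forall i0 j0 : int, (i0, j0) \in S ->
     (inB n (i0, j0 - 1) -> inB n (i0 + 1, j0) ->
        ((i0, j0 - 1) \in S) || ((i0 + 1, j0) \in S)) /\
     (inB n (i0 - 1, j0) -> inB n (i0, j0 + 1) ->
        ((i0 - 1, j0) \in S) || ((i0, j0 + 1) \in S))].

From mathcomp Require Import all_boot all_order all_algebra.
From mathcomp Require Import zify ring.
Import Order.TTheory GRing.Theory Num.Theory.
Local Open Scope ring_scope.

(* By the continuant identity
     P_k(x_i..) P_k(x_(i+1)..) - P_(k+1)(x_i..) P_(k-1)(x_(i+1)..) = (-c)^k,
   every diamond of the frieze has determinant (-c)^k > 0 when c < 0.  Hence
   if the top and bottom entries of a diamond are nonnegative, positivity of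
   one side entry forces positivity of the other.  A section meets every row,
   and positivity spreads from its points along each row: to the right by
   induction on the column and, inside a column, on the row from top to
   bottom, where the boundary rows -1 and n+2 vanish; to the left by the
   symmetry (i, j) |-> (-j, -i) of these hypotheses. *)

Lemma cont_mesh c x i k :
  cont c x i k * cont c x (i + 1) k - cont c x i k.+1 * (contpair c x (i + 1) k).2
  = (- c) ^+ k.
Proof.
rewrite /cont; elim: k => [|k IH] /=; first by rewrite mulr1 mulr0 subr0 expr0.
rewrite exprS -IH /=.
have -> : i + 1 + k%:Z = i + k.+1%:Z by lia.
case: (contpair c x i k) => p1 p2; case: (contpair c x (i + 1) k) => q1 q2 /=.
ring.
Qed.

Lemma contZ_pred c x i (k : nat) : contZ c x i (k%:Z - 1) = (contpair c x i k).2.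
Proof. by case: k => [|k] //; have -> : k.+1%:Z - 1 = k%:Z by lia. Qed.

Section FriezeRows.

Variables (c : rat) (n : nat) (f : int -> int -> rat).
Hypothesis f_frieze : is_frieze c n f.

Lemma frieze_row_bottom i : f i (i - 2) = 0.
Proof.
have [x [_ ->]] := f_frieze; last by rewrite /inB /=; lia.
by have -> : i - 2 - i + 1 = -1 by lia.
Qed.

Lemma frieze_row_top i : f i (i + n%:Z + 1) = 0.
Proof.
have [x [adm ->]] := f_frieze; last by rewrite /inB /=; lia.
have -> : i + n%:Z + 1 - i + 1 = n.+2%:Z by lia.
exact: adm.
Qed.

Lemma frieze_mesh i j : -1 <= j - i -> j - i <= n%:Z ->
  f i j * f (i + 1) (j + 1) - f i (j + 1) * f (i + 1) j = (- c) ^ (j - i + 1).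
Proof.
move=> r1 r2; have [x [_ fx]] := f_frieze.
have [k kE] : exists k : nat, j - i + 1 = k%:Z by exists (absz (j - i + 1)); lia.
rewrite !fx ?/inB /=; try lia.
have -> : j + 1 - (i + 1) + 1 = k%:Z by lia.
have -> : j + 1 - i + 1 = k.+1%:Z by lia.
have -> : j - (i + 1) + 1 = k%:Z - 1 by lia.
by rewrite kE contZ_pred -exprnP; apply: cont_mesh.
Qed.

Lemma frieze_mesh_gt0 i j : c < 0 -> -1 <= j - i -> j - i <= n%:Z ->
  0 < f i j * f (i + 1) (j + 1) - f i (j + 1) * f (i + 1) j.
Proof.
by move=> c0 r1 r2; rewrite frieze_mesh // exprz_gt0 // oppr_gt0.
Qed.

End FriezeRows.

Lemma section_down n S i j : is_section n S -> (i, j) \in S -> -1 <= j - i ->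
  ((i, j - 1) \in S) || ((i + 1, j) \in S).
Proof.
case=> _ _ SB sec ijS r1; have /andP [_ /= r2] := allP SB _ ijS.
by apply: (sec _ _ ijS).1; rewrite /inB /=; lia.
Qed.

Lemma section_up n S i j : is_section n S -> (i, j) \in S -> j - i <= n%:Z ->
  ((i - 1, j) \in S) || ((i, j + 1) \in S).
Proof.
case=> _ _ SB sec ijS r2; have /andP [/= r1 _] := allP SB _ ijS.
by apply: (sec _ _ ijS).2; rewrite /inB /=; lia.
Qed.

Lemma int_interval_ind (P : int -> Prop) (lo hi r0 : int) :
  lo <= r0 -> r0 <= hi -> P r0 ->
  (forall r, lo <= r -> r < hi -> P r -> P (r + 1)) ->
  (forall r, lo < r -> r <= hi -> P r -> P (r - 1)) ->
  forall r, lo <= r -> r <= hi -> P r.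
Proof.
move=> lo0 hi0 P0 Pup Pdown r lor rhi.
have up (d : nat) : r0 + d%:Z <= hi -> P (r0 + d%:Z).
  elim: d => [|d IH] h; first by rewrite addr0.
  have -> : r0 + d.+1%:Z = r0 + d%:Z + 1 by lia.
  by apply: Pup; [lia | lia | apply: IH; lia].
have down (d : nat) : lo <= r0 - d%:Z -> P (r0 - d%:Z).
  elim: d => [|d IH] h; first by rewrite subr0.
  have -> : r0 - d.+1%:Z = r0 - d%:Z - 1 by lia.
  by apply: Pdown; [lia | lia | apply: IH; lia].
case: (lerP r0 r) => h.
  have -> : r = r0 + (absz (r - r0))%:Z by lia.
  by apply: up; lia.
have -> : r = r0 - (absz (r0 - r))%:Z by lia.
by apply: down; lia.
Qed.

Lemma section_meets_row n S r : is_section n S -> -2 <= r -> r <= n%:Z + 1 ->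
  exists2 p, p \in S & p.2 - p.1 = r.
Proof.
move=> sec rlo rhi; have [_ Ssize SB _] := sec.
have [[i0 j0] p0S] : exists p, p \in S.
  by case: S Ssize {sec SB} => [|p s]; [rewrite addnS | exists p; rewrite mem_head].
have /andP [/= r1 r2] := allP SB _ p0S.
apply: (int_interval_ind (fun r => exists2 p, p \in S & p.2 - p.1 = r)
  _ _ _ r1 r2 _ _ _ _ rlo rhi).
- by exists (i0, j0).
- move=> r' _ rn [[i j] ijS /= rij].
  have /orP [h | h] : ((i - 1, j) \in S) || ((i, j + 1) \in S).
    by apply: (section_up _ _ _ _ sec ijS); lia.
  + by exists (i - 1, j) => //=; lia.
  + by exists (i, j + 1) => //=; lia.
- move=> r' rn _ [[i j] ijS /= rij].
  have /orP [h | h] : ((i, j - 1) \in S) || ((i + 1, j) \in S).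
    by apply: (section_down _ _ _ _ sec ijS); lia.
  + by exists (i, j - 1) => //=; lia.
  + by exists (i + 1, j) => //=; lia.
Qed.

Lemma seq_fst_lbound (s : seq (int * int)) : exists m, forall p, p \in s -> m <= p.1.
Proof.
elim: s => [|q s [m hm]]; first by exists 0.
exists (Order.min q.1 m) => p; rewrite inE ge_min => /predU1P [-> | /hm ->].
  by rewrite lexx.
by rewrite orbT.
Qed.

Section RightPropagation.

Variables (n : nat) (f : int -> int -> rat) (S : seq (int * int)).

Hypothesis mesh_gt0 : forall i j, -1 <= j - i -> j - i <= n%:Z ->
  0 < f i j * f (i + 1) (j + 1) - f i (j + 1) * f (i + 1) j.
Hypothesis row_bottom : forall i, f i (i - 2) = 0.
Hypothesis row_top : forall i, f i (i + n%:Z + 1) = 0.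
Hypothesis S_down : forall i j, (i, j) \in S -> -1 <= j - i ->
  ((i, j - 1) \in S) || ((i + 1, j) \in S).
Hypothesis S_up : forall i j, (i, j) \in S -> j - i <= n%:Z ->
  ((i - 1, j) \in S) || ((i, j + 1) \in S).
Hypothesis S_gt0 : forall i j, (i, j) \in S -> -1 <= j - i -> j - i <= n%:Z ->
  0 < f i j.

Lemma mesh_step_right a b : -1 <= b - a -> b - a <= n%:Z ->
  0 < f (a - 1) (b - 1) -> 0 <= f (a - 1) b -> 0 <= f a (b - 1) -> 0 < f a b.
Proof.
move=> r1 r2 hl hb ht.
have := mesh_gt0 (a - 1) (b - 1); rewrite !subrK => /(_ _ _) mesh.
have : 0 < f (a - 1) (b - 1) * f a b by apply: lt_le_trans (mesh _ _) _;
  [lia | lia | rewrite lerBlDr lerDl; apply: mulr_ge0].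
by rewrite pmulr_rgt0.
Qed.

Lemma ge0_of_interior_gt0 a b : -2 <= b - a -> b - a <= n%:Z + 1 ->
  (-1 <= b - a -> b - a <= n%:Z -> 0 < f a b) -> 0 <= f a b.
Proof.
move=> r1 r2 pos.
case: (ltrP (b - a) (-1)) => h1.
  have -> : b = a - 2 by lia.
  by rewrite row_bottom.
case: (ltrP n%:Z (b - a)) => h2; last exact/ltW/pos.
have -> : b = a + n%:Z + 1 by lia.
by rewrite row_top.
Qed.

Lemma gt0_right_of_section a b i j : -1 <= b - a -> b - a <= n%:Z ->
  (i, j) \in S -> j - i = b - a -> i <= a -> 0 < f a b.
Proof.
(* Induct on the distance from the leftmost column m of S (the section point
   in the next row may lie one column further left), then on the row. *)
have [m hm] := seq_fst_lbound S.
suff key (d : nat) : forall (k : nat) a b, a - m < d%:Z -> b - a + 1 < k%:Z ->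
    -1 <= b - a -> b - a <= n%:Z ->
    forall i j, (i, j) \in S -> j - i = b - a -> i <= a -> 0 < f a b.
  move=> r1 r2 ijS rij ia.
  by apply: (key `|a - m|.+1 `|b - a + 1|.+1 a b _ _ _ _ i j) => //; lia.
clear a b i j; elim: d => [|d IHd] k a b ad.
  by move=> _ _ _ i j /hm /= *; lia.
elim: k b => [|k IHk] b bk r1 r2 i j ijS rij ia; first lia.
have [ai | ai] := eqVneq a i.
  have -> : b = j by lia.
  by rewrite ai; apply: S_gt0; lia.
apply: mesh_step_right => //.
- by apply: (IHd k.+1 _ _ _ _ _ _ i j) => //; lia.
- apply: ge0_of_interior_gt0; [lia | lia | move=> _ r3].
  have /orP [h | h] : ((i - 1, j) \in S) || ((i, j + 1) \in S) by apply: S_up; lia.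
    by apply: (IHd `|b - a + 2|.+1 _ _ _ _ _ _ _ _ h); lia.
  by apply: (IHd `|b - a + 2|.+1 _ _ _ _ _ _ _ _ h); lia.
- apply: ge0_of_interior_gt0; [lia | lia | move=> r3 _].
  have /orP [h | h] : ((i, j - 1) \in S) || ((i + 1, j) \in S) by apply: S_down; lia.
    by apply: (IHk _ _ _ _ _ _ h); lia.
  by apply: (IHk _ _ _ _ _ _ h); lia.
Qed.

End RightPropagation.

Lemma gt0_left_of_section (n : nat) (f : int -> int -> rat) (S : seq (int * int)) :
  (forall i j, -1 <= j - i -> j - i <= n%:Z ->
     0 < f i j * f (i + 1) (j + 1) - f i (j + 1) * f (i + 1) j) ->
  (forall i, f i (i - 2) = 0) -> (forall i, f i (i + n%:Z + 1) = 0) ->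
  (forall i j, (i, j) \in S -> -1 <= j - i -> ((i, j - 1) \in S) || ((i + 1, j) \in S)) ->
  (forall i j, (i, j) \in S -> j - i <= n%:Z -> ((i - 1, j) \in S) || ((i, j + 1) \in S)) ->
  (forall i j, (i, j) \in S -> -1 <= j - i -> j - i <= n%:Z -> 0 < f i j) ->
  forall a b i j, -1 <= b - a -> b - a <= n%:Z ->
  (i, j) \in S -> j - i = b - a -> a <= i -> 0 < f a b.
Proof.
move=> mesh bottom top S_down S_up S_gt0 a b i j r1 r2 ijS rij ai.
pose g i j := f (- j) (- i).
pose T := [seq (- p.2, - p.1) | p <- S].
have memT u v : ((u, v) \in T) = ((- v, - u) \in S).
  apply/mapP/idP => [[[i' j'] ijS' [-> ->]] | h]; first by rewrite !opprK.
  by exists (- v, - u); rewrite //= !opprK.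
have g_mesh u v : -1 <= v - u -> v - u <= n%:Z ->
    0 < g u v * g (u + 1) (v + 1) - g u (v + 1) * g (u + 1) v.
  move=> s1 s2; have := mesh (- v - 1) (- u - 1); rewrite /g !subrK !opprD mulrC.
  by apply; lia.
have g_bottom u : g u (u - 2) = 0.
  by rewrite /g -(bottom (- u + 2)); congr (f _ _); lia.
have g_top u : g u (u + n%:Z + 1) = 0.
  by rewrite /g -(top (- (u + n%:Z + 1))); congr (f _ _); lia.
have T_down u v : (u, v) \in T -> -1 <= v - u -> ((u, v - 1) \in T) || ((u + 1, v) \in T).
  rewrite !memT => uvT s1; rewrite orbC opprD opprB (addrC 1).
  by apply: S_down uvT _; lia.
have T_up u v : (u, v) \in T -> v - u <= n%:Z -> ((u - 1, v) \in T) || ((u, v + 1) \in T).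
  rewrite !memT => uvT s2; rewrite orbC opprD opprB (addrC 1).
  by apply: S_up uvT _; lia.
have T_gt0 u v : (u, v) \in T -> -1 <= v - u -> v - u <= n%:Z -> 0 < g u v.
  by rewrite memT => uvT s1 s2; apply: S_gt0 uvT _ _; lia.
have := gt0_right_of_section n g T g_mesh g_bottom g_top T_down T_up T_gt0 (- b) (- a) (- j) (- i).
by rewrite /g memT !opprK; apply => //; lia.
Qed.

Theorem mainTheorem5 (c : rat) (n : nat) (f : int -> int -> rat)
  (S : seq (int * int)) :
  c < 0 -> (1 <= n)%N -> is_frieze c n f -> is_section n S ->
  (forall i j : int, (i, j) \in S -> -1 <= j - i -> j - i <= n%:Z ->
     0 < f i j) ->
  forall i j : int, -1 <= j - i -> j - i <= n%:Z -> 0 < f i j.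
Proof.
move=> c0 _ fr sec S_gt0 a b r1 r2.
have mesh i j := frieze_mesh_gt0 c n f fr i j c0.
have S_down i j := section_down n S i j sec.
have S_up i j := section_up n S i j sec.
have [[i j] ijS /= rij] : exists2 p, p \in S & p.2 - p.1 = b - a.
  by apply: (section_meets_row n S _ sec); lia.
have [ia | ai] := lerP i a.
  exact: (gt0_right_of_section n f S mesh (frieze_row_bottom c n f fr)
    (frieze_row_top c n f fr) S_down S_up S_gt0 a b i j).
exact: (gt0_left_of_section n f S mesh (frieze_row_bottom c n f fr)
  (frieze_row_top c n f fr) S_down S_up S_gt0 a b i j _ _ _ _ (ltW ai)).
Qed.
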